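(* Let $X$ be a smooth projective curve of genus 2, let $S$ be the moduli variety of S-equivalence classes of semi-stable rank-2 vector bundles of degree 0 on $X$ with trivial determinant, and let $K\subset S$ be the set of non-stable classes, i.e. the classes of $j\oplus j^{-1}$ with $j$ a line bundle of degree 0 on $X$ (so $K$ is the Kummer surface of the Jacobian of $X$). For $a=j\oplus j^{-1}$, $b=l\oplus l^{-1}$ in $K$ define $$a\star_s b=\big(j\otimes l\oplus j^{-1}\otimes l^{-1},\ j\otimes l^{-1}\oplus j^{-1}\otimes l\big).$$ Then $\star_s\colon K\times K\to(K)^2$ defines a two-valued group structure on $K$.
   Context: A holomorphic bundle $W$ is semi-stable if $\deg V/\mathrm{rank}\,V\le \deg W/\mathrm{rank}\,W$ for every proper subbundle $V$ (stable with strict inequality); two semi-stable bundles are S-equivalent if the graded bundles associated with their Jordan–Hölder filtrations are isomorphic. $(K)^2$ is the symmetric square. A two-valued group structure on a set $Y$ is a map $\ast\colon Y\times Y\to(Y)^2$ that is associative (the multisets $[x\ast(y\ast z)_1,x\ast(y\ast z)_2]$ and $[(x\ast y)_1\ast z,(x\ast y)_2\ast z]$ coincide), with a unit $e$ satisfying $e\ast x=x\ast e=[x,x]$ and a map $\mathrm{inv}$ with $e\in\mathrm{inv}(x)\ast x$, $e\in x\ast\mathrm{inv}(x)$. *)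

From HB Require Import structures.
From mathcomp Require Import all_boot all_algebra.
From Stdlib Require Import List Permutation ClassicalEpsilon.
Set Implicit Arguments. Unset Strict Implicit. Unset Printing Implicit Defensive.
Import GRing.Theory.
Local Open Scope ring_scope.

(* Two-valued multiplications: Y x Y -> (Y)^2.  An element of the symmetric
   square (Y)^2 is represented by an ordered pair; two pairs represent the
   same element of (Y)^2 iff they are permutations of each other. *)
Definition mset2 (Y : Type) (p : Y * Y) : list Y := p.1 :: p.2 :: nil.

Definition two_valued_group (Y : Type) (m : Y -> Y -> Y * Y) : Prop :=
  (forall x y z : Y,
     Permutation (mset2 (m x (m y z).1) ++ mset2 (m x (m y z).2))
                 (mset2 (m (m x y).1 z) ++ mset2 (m (m x y).2 z))) /\
  exists (e : Y) (inv : Y -> Y),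
    (forall x, Permutation (mset2 (m e x)) (x :: x :: nil) /\
               Permutation (mset2 (m x e)) (x :: x :: nil)) /\
    (forall x, In e (mset2 (m (inv x) x)) /\ In e (mset2 (m x (inv x)))).

(* The group of degree-0 line bundles is modelled by an abelian group A
   (written additively: tensor = +, dual = -).  The class of j (+) j^{-1}
   in the Kummer set K = A/{+-1} is the orbit {j, -j}. *)
Definition pm (A : zmodType) (j : A) : A -> Prop := fun x => x = j \/ x = - j.

Definition Kum (A : zmodType) : Type := {s : A -> Prop | exists j : A, s = pm j}.

Definition cls (A : zmodType) (j : A) : Kum A :=
  exist (fun s => exists j0 : A, s = pm j0) (pm j) (ex_intro _ j erefl).

Definition rep (A : zmodType) (a : Kum A) : A :=
  proj1_sig (constructive_indefinite_description _ (proj2_sig a)).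

Definition star_s (A : zmodType) (a b : Kum A) : Kum A * Kum A :=
  (cls (rep a + rep b), cls (rep a - rep b)).

(* The Kummer set K is A / {+1, -1}, and [j] *_s [l] is the image in K of the
   multiset {j + l, j - l}; replacing j or l by its opposite only negates or
   swaps these two elements, so *_s is well defined.  Both sides of the
   associativity law are then the image of the multiset {a +- b +- c}, the
   class of 0 is a unit, and every element is its own inverse because
   [j] *_s [j] contains [j - j] = [0]. *)
From mathcomp Require Import all_boot all_algebra.
From Stdlib Require Import List Permutation.
From Stdlib Require Import FunctionalExtensionality PropExtensionality ProofIrrelevance ClassicalEpsilon.
Set Implicit Arguments. Unset Strict Implicit.
Import GRing.Theory.
Local Open Scope ring_scope.

Section Mset2.
Variable Y : Type.

Definition mset2_bind (m : Y -> Y * Y) (p : Y * Y) : list Y :=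
  mset2 (m p.1) ++ mset2 (m p.2).

Lemma perm_mset2P (p q : Y * Y) :
  Permutation (mset2 p) (mset2 q) -> p = q \/ p = (q.2, q.1).
Proof.
case: p q => [x y] [u v] perm_xy.
by case: (Permutation_length_2 perm_xy) => /= -[-> ->]; [left|right].
Qed.

Lemma perm_mset2_bind (m : Y -> Y * Y) (p q : Y * Y) :
  Permutation (mset2 p) (mset2 q) ->
  Permutation (mset2_bind m p) (mset2_bind m q).
Proof.
move=> /perm_mset2P [->|->]; first exact: Permutation_refl.
exact: (Permutation_app_comm (mset2 _) (mset2 _)).
Qed.

End Mset2.

Section Kummer.
Variable A : zmodType.
Implicit Types (j l a b c : A) (x y z : Kum A).

Lemma cls_eq j l : pm j = pm l -> cls j = cls l.
Proof. by move=> pm_jl; apply: eq_sig_hprop => // ? ? ?; apply: proof_irrelevance. Qed.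

Lemma clsN j : cls (- j) = cls j.
Proof.
apply: cls_eq; apply: functional_extensionality => u.
by apply: propositional_extensionality; rewrite /pm opprK; tauto.
Qed.

Lemma cls_rep x : cls (rep x) = x.
Proof.
rewrite /rep; case: constructive_indefinite_description => k /= def_x.
case: x def_x => s Hs /= def_s.
by apply: eq_sig_hprop => [? ? ?|]; [apply: proof_irrelevance | rewrite /= def_s].
Qed.

Lemma rep_cls j : pm j (rep (cls j)).
Proof.
rewrite /rep; case: constructive_indefinite_description => k /= def_j.
have : pm k k by left.
by rewrite -def_j /pm => -[->|->]; [left|right]; rewrite ?opprK.
Qed.

Lemma star_s_cls j l :
  star_s (cls j) (cls l) = (cls (j + l), cls (j - l)) \/
  star_s (cls j) (cls l) = (cls (j - l), cls (j + l)).
Proof.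
rewrite /star_s; case: (rep_cls j) => ->; case: (rep_cls l) => ->.
- by left.
- by right; rewrite opprK.
- by right; rewrite [- j + l]addrC -(opprB j l) -(opprD j l) !clsN.
- by left; rewrite opprK [- j + l]addrC -(opprB j l) -(opprD j l) !clsN.
Qed.

Lemma perm_star_s_cls j l :
  Permutation (mset2 (star_s (cls j) (cls l))) (mset2 (cls (j + l), cls (j - l))).
Proof.
by case: (star_s_cls j l) => ->; [apply: Permutation_refl | apply: perm_swap].
Qed.

Let sign_classes a b c : list (Kum A) :=
  [:: cls (a + b + c); cls (a + b - c); cls (a - b + c); cls (a - b - c)].

Lemma star_s_assoc_left a b c :
  Permutation (mset2_bind (star_s (cls a)) (star_s (cls b) (cls c)))
              (sign_classes a b c).
Proof.
apply: Permutation_trans (perm_mset2_bind _ (perm_star_s_cls b c)) _.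
apply: Permutation_trans
  (Permutation_app (perm_star_s_cls a (b + c)) (perm_star_s_cls a (b - c))) _.
rewrite /= (addrA a b c) (opprD b c) (addrA a (- b)) (addrA a b (- c)).
rewrite (opprB b c) (addrA a c (- b)) (addrAC a c (- b)).
by apply: perm_skip; apply: (Permutation_app_comm [:: _] [:: _; _]).
Qed.

Lemma star_s_assoc_right a b c :
  Permutation (mset2_bind (fun u => star_s u (cls c)) (star_s (cls a) (cls b)))
              (sign_classes a b c).
Proof.
apply: Permutation_trans (perm_mset2_bind _ (perm_star_s_cls a b)) _.
exact: (Permutation_app (perm_star_s_cls (a + b) c) (perm_star_s_cls (a - b) c)).
Qed.

Lemma star_s_assoc x y z :
  Permutation (mset2_bind (star_s x) (star_s y z))
              (mset2_bind (fun u => star_s u z) (star_s x y)).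
Proof.
rewrite -(cls_rep x) -(cls_rep y) -(cls_rep z).
apply: Permutation_trans (star_s_assoc_left _ _ _) _.
exact/Permutation_sym/star_s_assoc_right.
Qed.

Lemma star_s0x x : Permutation (mset2 (star_s (cls 0) x)) [:: x; x].
Proof. by rewrite -(cls_rep x); move: (perm_star_s_cls 0 (rep x)); rewrite add0r sub0r clsN. Qed.

Lemma star_sx0 x : Permutation (mset2 (star_s x (cls 0))) [:: x; x].
Proof. by rewrite -(cls_rep x); move: (perm_star_s_cls (rep x) 0); rewrite addr0 subr0. Qed.

Lemma cls0_in_star_s_self x : In (cls 0) (mset2 (star_s x x)).
Proof.
rewrite -(cls_rep x); apply: Permutation_in (Permutation_sym (perm_star_s_cls _ _)) _.
by rewrite subrr; right; left.
Qed.

End Kummer.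

Theorem mainTheorem5 (A : zmodType) :
  (forall j l : A,
     Permutation (mset2 (star_s (cls j) (cls l)))
                 (mset2 (cls (j + l), cls (j - l)))) /\
  two_valued_group (@star_s A).
Proof.
split; first exact: perm_star_s_cls.
split; first exact: star_s_assoc.
exists (cls 0), id; split => x; first by split; [exact: star_s0x | exact: star_sx0].
by split; exact: cls0_in_star_s_self.
Qed.
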